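(* Let $\mathcal E=\mathbb R^{d_\eta}$, $\mathcal B=\mathbb R^{d_b}$, $\mathcal I=\mathbb R^{d_\mu}$ and let $\Pi\in\mathbb R^{d\times d}$, $d=d_\eta+d_b+d_\mu$, be a symmetric positive-definite matrix, written in block form with respect to the partition $x=(\eta,b,\mu)\in\mathcal E\times\mathcal B\times\mathcal I$ as $$\Pi=\begin{bmatrix}\Pi_{\eta}&\Pi_{\eta b}&\Pi_{\eta\mu}\\ \Pi_{b\eta}&\Pi_b&\Pi_{b\mu}\\ \Pi_{\mu\eta}&\Pi_{\mu b}&\Pi_\mu\end{bmatrix},$$ and assume the Markov blanket condition $\Pi_{\eta\mu}=\Pi_{\mu\eta}^\top=0$. Let $\Sigma:=\Pi^{-1}$ with corresponding blocks $\Sigma_{\eta b},\Sigma_b,\Sigma_{\mu b}$, and define the linear maps $\boldsymbol\eta:\mathcal B\to\mathcal E$, $\boldsymbol\eta(b)=\Sigma_{\eta b}\Sigma_b^{-1}b$ and $\boldsymbol\mu:\mathcal B\to\mathcal I$, $\boldsymbol\mu(b)=\Sigma_{\mu b}\Sigma_b^{-1}b$. Then the following are equivalent: (i) there exists a function $\sigma:\operatorname{Im}\boldsymbol\mu\to\operatorname{Im}\boldsymbol\eta$ such that $\sigma(\boldsymbol\mu(b))=\boldsymbol\eta(b)$ for every $b\in\mathcal B$; (ii) for all $b_1,b_2\in\mathcal B$, $\boldsymbol\mu(b_1)=\boldsymbol\mu(b_2)$ implies $\boldsymbol\eta(b_1)=\boldsymbol\eta(b_2)$; (iii) $\ker\Sigma_{\mu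 b}\subset\ker\Sigma_{\eta b}$; (iv) $\ker\Pi_{\mu b}\subset\ker\Pi_{\eta b}$.
   Context: Here $\Pi$ is the precision matrix of a Gaussian density $p(x)=\mathcal N(x;0,\Pi^{-1})$ on $\mathbb R^d$; the condition $\Pi_{\eta\mu}=0$ is equivalent to conditional independence of $\eta$ and $\mu$ given $b$, and $\boldsymbol\eta(b)=\mathbb E[\eta\mid b]$, $\boldsymbol\mu(b)=\mathbb E[\mu\mid b]$ are the conditional expectations under $p$. Blocks $\Sigma_{\eta b},\Sigma_{\mu b},\Sigma_b$ denote the corresponding submatrices of $\Sigma=\Pi^{-1}$ (not the inverses of blocks of $\Pi$); $\Sigma_b$ is invertible as a principal submatrix of a positive-definite matrix. $\ker$ and $\operatorname{Im}$ denote kernel and image. *)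

From HB Require Import structures.
From mathcomp Require Import all_boot all_order all_algebra.
Set Implicit Arguments. Unset Strict Implicit. Unset Printing Implicit Defensive.
Import Order.TTheory GRing.Theory Num.Theory.
Local Open Scope ring_scope.

(* Coordinates x = (eta, b, mu) in R^(de + db + dmu), with
   d = (de + db) + dmu. Index embeddings of the three blocks. *)
Definition eta_idx (de db dmu : nat) (i : 'I_de) : 'I_(de + db + dmu) :=
  lshift dmu (lshift db i).
Definition b_idx (de db dmu : nat) (j : 'I_db) : 'I_(de + db + dmu) :=
  lshift dmu (rshift de j).
Definition mu_idx (de db dmu : nat) (k : 'I_dmu) : 'I_(de + db + dmu) :=
  rshift (de + db) k.

Definition sym_posdef (R : realFieldType) (n : nat) (A : 'M[R]_n) : Prop :=
  A^T = A /\ forall x : 'cV[R]_n, x != 0 -> 0 < (x^T *m A *m x) ord0 ord0.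

(* Reading off the (eta, b) and (mu, b) blocks of Pi * Sigma = 1 and using
   Pi_{eta mu} = Pi_{mu eta} = 0 gives
     Pi_eta Sigma_{eta b} = - Pi_{eta b} Sigma_b,   Pi_mu Sigma_{mu b} = - Pi_{mu b} Sigma_b.
   Diagonal blocks of a positive-definite matrix and of its inverse are again
   positive definite, hence invertible; so ker Sigma_{mu b} = Sigma_b^-1 ker Pi_{mu b},
   likewise for eta, and (iii) <-> (iv) follows.  (i) <-> (ii) is the criterion
   for a map to factor through another one, and (ii) <-> (iii) is linearity. *)

From HB Require Import structures.
From mathcomp Require Import all_boot all_order all_algebra.
From mathcomp Require Import zify.
From Stdlib Require Import ProofIrrelevance ClassicalEpsilon.
Set Implicit Arguments. Unset Strict Implicit. Unset Printing Implicit Defensive.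
Import Order.TTheory GRing.Theory Num.Theory.
Local Open Scope ring_scope.

Lemma factor_through_image_iff (T X Y : Type) (f : T -> X) (g : T -> Y) :
  (exists sigma : {x | exists t, x = f t} -> {y | exists t, y = g t},
     forall t, proj1_sig (sigma (exist _ (f t) (ex_intro _ t erefl))) = g t)
  <-> (forall t1 t2, f t1 = f t2 -> g t1 = g t2).
Proof.
split=> [[sigma sigmaE] t1 t2 eq_f | eq_g].
  rewrite -!sigmaE; congr (proj1_sig (sigma _)).
  by apply: eq_sig_hprop => //= x p q; apply: proof_irrelevance.
pose pick (x : {x | exists t, x = f t}) :=
  proj1_sig (constructive_indefinite_description _ (proj2_sig x)).
exists (fun x => exist _ (g (pick x)) (ex_intro _ (pick x) erefl)) => t /=.
rewrite /pick; case: constructive_indefinite_description => t' /= eq_f.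
by apply: eq_g; rewrite eq_f.
Qed.

Section KernelInclusion.
Variable F : fieldType.

Lemma unitmx_mulmx_eq0 m n (P : 'M[F]_m) (x : 'M[F]_(m, n)) :
  P \in unitmx -> (P *m x == 0) = (x == 0).
Proof.
move=> Pu; apply/eqP/eqP => [/(congr1 (mulmx (invmx P)))|->].
  by rewrite mulKmx // mulmx0.
by rewrite mulmx0.
Qed.

Lemma fibers_sub_iff_ker_sub m p n (A : 'M[F]_(m, n)) (B : 'M[F]_(p, n))
    (M : 'M[F]_n) : M \in unitmx ->
  (forall v1 v2 : 'cV_n, A *m M *m v1 = A *m M *m v2 -> B *m M *m v1 = B *m M *m v2)
  <-> (forall v : 'cV_n, A *m v = 0 -> B *m v = 0).
Proof.
move=> Mu; split=> [eq_fib v Av0 | ker_sub v1 v2 eqA].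
  have := eq_fib (invmx M *m v) 0.
  by rewrite -!mulmxA mulKVmx // !mulmx0 Av0 => /(_ erefl).
apply/eqP; rewrite -subr_eq0 -mulmxBr -mulmxA ker_sub //.
by rewrite mulmxA mulmxBr eqA subrr.
Qed.

Lemma mulmx_eq0_transfer m n p q (P : 'M[F]_m) (X : 'M[F]_(m, n))
    (Q : 'M[F]_(m, p)) (S : 'M[F]_(p, n)) (v : 'M[F]_(n, q)) :
  P \in unitmx -> P *m X + Q *m S = 0 -> (X *m v == 0) = (Q *m (S *m v) == 0).
Proof.
move=> Pu /eqP; rewrite addr_eq0 => /eqP PX.
by rewrite -(unitmx_mulmx_eq0 _ Pu) mulmxA PX mulNmx oppr_eq0 mulmxA.
Qed.

Lemma ker_sub_transfer m1 m2 n (P1 : 'M[F]_m1) (P2 : 'M[F]_m2)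
    (X1 X1' : 'M[F]_(m1, n)) (X2 X2' : 'M[F]_(m2, n)) (S : 'M[F]_n) :
  P1 \in unitmx -> P2 \in unitmx -> S \in unitmx ->
  P1 *m X1 + X1' *m S = 0 -> P2 *m X2 + X2' *m S = 0 ->
  (forall v : 'cV_n, X1 *m v = 0 -> X2 *m v = 0) <->
  (forall v : 'cV_n, X1' *m v = 0 -> X2' *m v = 0).
Proof.
move=> P1u P2u Su rel1 rel2.
have ker1 := mulmx_eq0_transfer _ P1u rel1.
have ker2 := mulmx_eq0_transfer _ P2u rel2.
split=> ker_sub v.
  rewrite -[v](mulKVmx Su) => /eqP; rewrite -ker1 => /eqP/ker_sub/eqP.
  by rewrite ker2 => /eqP.
by move/eqP; rewrite ker1 => /eqP/ker_sub/eqP; rewrite -ker2 => /eqP.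
Qed.

End KernelInclusion.

Section PositiveDefinite.
Variable R : realFieldType.

Definition posdef n (A : 'M[R]_n) : Prop :=
  forall x : 'cV[R]_n, x != 0 -> 0 < (x^T *m A *m x) ord0 ord0.

Lemma posdef_unitmx n (A : 'M[R]_n) : posdef A -> A \in unitmx.
Proof.
move=> A_pd; rewrite -row_free_unit; apply: inj_row_free => v vA0.
apply: trmx_inj; rewrite trmx0; apply/eqP/negPn/negP => /A_pd.
by rewrite trmxK vA0 mul0mx mxE ltxx.
Qed.

Lemma posdef_mxsub n m (f : 'I_m -> 'I_n) (A : 'M[R]_n) :
  injective f -> posdef A -> posdef (mxsub f f A).
Proof.
move=> f_inj A_pd y y0; pose E := rowsub f (1%:M : 'M[R]_n).
have mxsubE B : mxsub f f B = E *m B *m E^T.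
  by rewrite -[B in LHS]mulmx1 mxsub_mul rowsubE /E trmx_mxsub trmx1.
have EEt : E *m E^T = 1%:M.
  have := mxsubE 1%:M; rewrite mulmx1 => <-; apply/matrixP => i j.
  by rewrite !mxE (inj_eq f_inj).
have -> : y^T *m mxsub f f A *m y = (E^T *m y)^T *m A *m (E^T *m y).
  by rewrite mxsubE trmx_mul trmxK !mulmxA.
apply: A_pd; apply: contra y0 => /eqP Ety0.
by rewrite -(mul1mx y) -EEt -mulmxA Ety0 mulmx0.
Qed.

Lemma posdef_invmx n (A : 'M[R]_n) : posdef A -> posdef (invmx A).
Proof.
move=> A_pd x; have Au := posdef_unitmx A_pd.
rewrite -[x](mulKVmx Au); move: (invmx A *m x) => y.
rewrite unitmx_mulmx_eq0 // => y0.
have -> : (A *m y)^T *m invmx A *m (A *m y) = (y^T *m A *m y)^T.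
  by rewrite -mulmxA mulKmx // !trmx_mul trmxK mulmxA.
by rewrite mxE; apply: A_pd.
Qed.

End PositiveDefinite.

Lemma mxsub1_disjoint (R : pzSemiRingType) m n p
    (f : 'I_m -> 'I_p) (g : 'I_n -> 'I_p) :
  (forall i j, f i != g j) -> mxsub f g (1%:M : 'M[R]_p) = 0.
Proof. by move=> fg; apply/matrixP => i j; rewrite !mxE (negbTE (fg i j)). Qed.

Section MarkovBlanketBlocks.
Variables (de db dmu : nat).
Local Notation N := (de + db + dmu).
Local Notation e := (@eta_idx de db dmu).
Local Notation b := (@b_idx de db dmu).
Local Notation mu := (@mu_idx de db dmu).

Lemma eta_idx_inj : injective e.
Proof. by move=> i j /lshift_inj/lshift_inj. Qed.

Lemma b_idx_inj : injective b.
Proof. by move=> i j /lshift_inj/rshift_inj. Qed.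

Lemma mu_idx_inj : injective mu.
Proof. by move=> i j /rshift_inj. Qed.

Lemma eta_idx_neq_b_idx i j : e i != b j.
Proof. by rewrite -val_eqE /=; have := ltn_ord i; lia. Qed.

Lemma mu_idx_neq_b_idx i j : mu i != b j.
Proof. by rewrite -val_eqE /=; have := ltn_ord j; lia. Qed.

Variable R : pzRingType.

Lemma mxsub_mulmx3 m p (f : 'I_m -> 'I_N) (h : 'I_p -> 'I_N) (A B : 'M[R]_N) :
  mxsub f h (A *m B) = mxsub f e A *m mxsub e h B + mxsub f b A *m mxsub b h B
    + mxsub f mu A *m mxsub mu h B.
Proof.
apply/matrixP=> i j; rewrite !mxE big_split_ord big_split_ord /=.
by congr (_ + _ + _); apply: eq_bigr => k _; rewrite !mxE.
Qed.

Lemma mulmx1_block_eta_b (A B : 'M[R]_N) :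
  A *m B = 1%:M -> mxsub e mu A = 0 ->
  mxsub e e A *m mxsub e b B + mxsub e b A *m mxsub b b B = 0.
Proof.
move=> AB1 A_em0; have := congr1 (mxsub e b) AB1.
by rewrite mxsub_mulmx3 A_em0 mul0mx addr0 mxsub1_disjoint //; apply: eta_idx_neq_b_idx.
Qed.

Lemma mulmx1_block_mu_b (A B : 'M[R]_N) :
  A *m B = 1%:M -> mxsub mu e A = 0 ->
  mxsub mu mu A *m mxsub mu b B + mxsub mu b A *m mxsub b b B = 0.
Proof.
move=> AB1 A_me0; have := congr1 (mxsub mu b) AB1.
rewrite mxsub_mulmx3 A_me0 mul0mx add0r addrC mxsub1_disjoint //.
exact: mu_idx_neq_b_idx.
Qed.

End MarkovBlanketBlocks.

Theorem lemma2p1 (R : realFieldType) (de db dmu : nat)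
  (Pi : 'M[R]_(de + db + dmu)) :
  sym_posdef Pi ->
  (* Markov blanket condition: Pi_{eta mu} = Pi_{mu eta}^T = 0 *)
  mxsub (@eta_idx de db dmu) (@mu_idx de db dmu) Pi = 0 ->
  mxsub (@mu_idx de db dmu) (@eta_idx de db dmu) Pi = 0 ->
  let Sigma := invmx Pi in
  let Sigma_eb := mxsub (@eta_idx de db dmu) (@b_idx de db dmu) Sigma in
  let Sigma_b := mxsub (@b_idx de db dmu) (@b_idx de db dmu) Sigma in
  let Sigma_mb := mxsub (@mu_idx de db dmu) (@b_idx de db dmu) Sigma in
  let Pi_eb := mxsub (@eta_idx de db dmu) (@b_idx de db dmu) Pi in
  let Pi_mb := mxsub (@mu_idx de db dmu) (@b_idx de db dmu) Pi in
  let etaf := fun b : 'cV[R]_db => Sigma_eb *m invmx Sigma_b *m b in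
  let muf := fun b : 'cV[R]_db => Sigma_mb *m invmx Sigma_b *m b in
  [<->
   (* (i) *)
   exists sigma : {x : 'cV[R]_dmu | exists b, x = muf b} ->
                  {y : 'cV[R]_de | exists b, y = etaf b},
     forall b : 'cV[R]_db,
       proj1_sig (sigma (exist _ (muf b) (ex_intro _ b erefl))) = etaf b;
   (* (ii) *)
   forall b1 b2 : 'cV[R]_db, muf b1 = muf b2 -> etaf b1 = etaf b2;
   (* (iii) ker Sigma_{mu b} ⊂ ker Sigma_{eta b} *)
   forall v : 'cV[R]_db, Sigma_mb *m v = 0 -> Sigma_eb *m v = 0;
   (* (iv) ker Pi_{mu b} ⊂ ker Pi_{eta b} *)
   forall v : 'cV[R]_db, Pi_mb *m v = 0 -> Pi_eb *m v = 0].
Proof.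
move=> [_ Pi_pd] Pi_em0 Pi_me0 Sigma Sigma_eb Sigma_b Sigma_mb Pi_eb Pi_mb etaf muf.
have PiSigma : Pi *m Sigma = 1%:M by apply/mulmxV/posdef_unitmx.
have Sigma_b_unit : Sigma_b \in unitmx.
  exact/posdef_unitmx/posdef_mxsub/posdef_invmx/Pi_pd/b_idx_inj.
have Pi_ee_unit := posdef_unitmx (posdef_mxsub (@eta_idx_inj de db dmu) Pi_pd).
have Pi_mm_unit := posdef_unitmx (posdef_mxsub (@mu_idx_inj de db dmu) Pi_pd).
have iff12 := factor_through_image_iff muf etaf.
have Sigma_b_inv_unit : invmx Sigma_b \in unitmx by rewrite unitmx_inv.
have iff23 := fibers_sub_iff_ker_sub Sigma_mb Sigma_eb Sigma_b_inv_unit.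
have iff34 := ker_sub_transfer Pi_mm_unit Pi_ee_unit Sigma_b_unit
  (mulmx1_block_mu_b PiSigma Pi_me0) (mulmx1_block_eta_b PiSigma Pi_em0).
by tfae=> [/iff12 | /iff23 | /iff34 | /iff34/iff23/iff12].
Qed.
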